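(* Consider the online ADDIS setting described in the context, and assume the predictable sequences satisfy $\tau_j>\lambda_j\ge\alpha_j$ for every $j\in\mathbb N$. (a) If the null $p$-values are conditionally uniformly conservative, then any procedure with $\widehat{\mathrm{FDP}}_{\mathrm{ADDIS}}(t)\le\alpha$ for all $t\in\mathbb N$ (almost surely) satisfies $\mathrm{mFDR}(t)\le\alpha$ for all $t\in\mathbb N$. (b) If in addition the null $p$-values are independent of each other and of the non-null $p$-values, and for every $t$ the quantities $\alpha_t$, $\lambda_t$ and $1-\tau_t$ are monotonic functions of the past, then any procedure with $\widehat{\mathrm{FDP}}_{\mathrm{ADDIS}}(t)\le\alpha$ for all $t\in\mathbb N$ satisfies $\mathrm{FDR}(t)\le\alpha$ for all $t\in\mathbb N$.
   Context: Let $P_1,P_2,\dots$ be $p$-values for hypotheses $H_1,H_2,\dots$, and let $\mathcal H_0\subseteq\mathbb N$ be the (fixed, unknown) set of indices of true null hypotheses. Fix a target level $\alpha\in(0,1)$. An online procedure uses sequences $\{\alpha_j\},\{\lambda_j\},\{\tau_j\}$ with values in $[0,1]$ and defines indicators $S_j=\mathbf 1\{P_j\le\tau_j\}$, $C_j=\mathbf 1\{P_j\le\lambda_j\}$, $R_j=\mathbf 1\{P_j\le\alpha_j\}$ ($H_j$ is rejected iff $R_j=1$), and $R(t)=\{j\le t:R_j=1\}$. Let $\mathcal F^t=\sigma(R_{1:t},C_{1:t},S_{1:t})$ (with $\mathcal F^0$ trivial). The sequences are predictable: $\alpha_t,\lambda_t,\tau_t$ are $\mathcal F^{t-1}$-measurable,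 i.e. deterministic functions of $(R_{1:t-1},C_{1:t-1},S_{1:t-1})$. The null $p$-values are (conditionally) uniformly conservative if for every $t\in\mathcal H_0$ and all $x,\tau\in(0,1)$, $\Pr(P_t/\tau\le x\mid P_t\le\tau,\mathcal F^{t-1})\le x$ (equivalently, the conditional CDF $F$ of $P_t$ given $\mathcal F^{t-1}$ satisfies $F(\tau x)\le xF(\tau)$ for all $x,\tau\in[0,1]$). Define $$\widehat{\mathrm{FDP}}_{\mathrm{ADDIS}}(t)=\frac{\sum_{j\le t}\alpha_j\frac{\mathbf 1\{\lambda_j<P_j\le\tau_j\}}{\tau_j-\lambda_j}}{|R(t)|\vee1},$$ $\mathrm{FDR}(t)=\mathbb E\big[\frac{|\mathcal H_0\cap R(t)|}{|R(t)|\vee1}\big]$ and $\mathrm{mFDR}(t)=\frac{\mathbb E[|\mathcal H_0\cap R(t)|]}{\mathbb E[|R(t)|\vee1]}$. A function $f_t(R_{1:t-1},C_{1:t-1},S_{1:t-1}):\{0,1\}^{3(t-1)}\to[0,1]$ is a monotonic function of the past if it is coordinatewise nondecreasing in each $R_i$ and each $C_i$ and coordinatewise nonincreasing in each $S_i$. *)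

From HB Require Import structures.
From mathcomp Require Import all_boot all_order all_algebra.
From mathcomp Require Import all_classical all_reals all_analysis.
Set Implicit Arguments.
Unset Strict Implicit.
Unset Printing Implicit Defensive.
Import Order.TTheory GRing.Theory Num.Theory.
Local Open Scope classical_set_scope.
Local Open Scope ring_scope.

(* Hypotheses are indexed 0,1,2,... (paper index j+1).  The "past" before
   hypothesis t is the history of the triples (R_j, C_j, S_j), j < t. *)
Definition hist := seq (bool * bool * bool).

Section ADDIS.
Context {d : measure_display} {T : measurableType d} {R : realType}.
Variables (P : nat -> T -> R) (alpha lambda tau : nat -> hist -> R).

Definition step (t : nat) (h : hist) (w : T) : bool * bool * bool :=
  (P t w <= alpha t h, P t w <= lambda t h, P t w <= tau t h).

Fixpoint history (t : nat) (w : T) : hist :=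
  if t is t'.+1 then rcons (history t' w) (step t' (history t' w) w) else [::].

Definition alpha_at t w := alpha t (history t w).
Definition lambda_at t w := lambda t (history t w).
Definition tau_at t w := tau t (history t w).

Definition rej j w : bool := P j w <= alpha_at j w.

Definition num_rej t w : nat := \sum_(j < t) rej j w.

Definition num_false_rej (null : nat -> bool) t w : nat :=
  \sum_(j < t | null j) rej j w.

Definition FDP_ADDIS t w : R :=
  (\sum_(j < t) alpha_at j w *
      ((if (lambda_at j w < P j w) && (P j w <= tau_at j w) then 1 else 0)
        / (tau_at j w - lambda_at j w)))
  / (maxn (num_rej t w) 1)%:R.

Variable (Pr : probability T R).

Definition FDR null t : \bar R :=
  'E_Pr[fun w => (num_false_rej null t w)%:R / (maxn (num_rej t w) 1)%:R].

Definition mFDR null t : R :=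
  fine ('E_Pr[fun w => (num_false_rej null t w)%:R])
  / fine ('E_Pr[fun w => (maxn (num_rej t w) 1)%:R]).

(* Conditional uniform conservativeness: F^{t} (sigma-algebra of the past)
   is generated by the finite-valued history, so conditioning on it is
   conditioning on the atoms [history t = h]; F(tau x) <= x F(tau) on each
   atom is, after multiplying by Pr(atom), the inequality below. *)
Definition cond_unif_conservative (null : nat -> bool) :=
  forall t, null t -> forall h : hist, size h = t ->
  forall x s : R, 0 < x < 1 -> 0 < s < 1 ->
  (Pr ([set w | (P t w <= s * x)%R] `&` [set w | history t w = h])
   <= x%:E * Pr ([set w | (P t w <= s)%R] `&` [set w | history t w = h]))%E.

(* Null p-values are mutually independent and independent of the
   (joint family of) non-null p-values: product rule over finite families. *)
Definition nulls_independent (null : nat -> bool) :=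
  forall (N M : seq nat) (B : nat -> set R),
  uniq N -> all null N -> all (fun k => ~~ null k) M ->
  (forall j, measurable (B j)) ->
  Pr (\bigcap_(j in [set j | j \in N ++ M]) (P j @^-1` B j)) =
  ((\prod_(j <- N) Pr (P j @^-1` B j)) *
     Pr (\bigcap_(k in [set k | k \in M]) (P k @^-1` B k)))%E.

End ADDIS.

Definition hist_le (h h' : hist) : Prop :=
  size h = size h' /\
  forall i, (i < size h)%N ->
    let: (r, c, s) := nth (false, false, false) h i in
    let: (r', c', s') := nth (false, false, false) h' i in
    [&& r ==> r', c ==> c' & s' ==> s].

Definition monotone_past {R : realType} (f : nat -> hist -> R) : Prop :=
  forall t (h h' : hist), size h = t -> hist_le h h' -> f t h <= f t h'.

(* For a null hypothesis j, conservativeness of P_j given the past bounds the rejection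
   probability Pr(P_j <= alpha_j) by alpha_j / (tau_j - lambda_j) * Pr(lambda_j < P_j <= tau_j),
   an elementary fact about distribution functions F with F(s x) <= x F(s)
   (conservative_le_slice).  Summing over the nulls, E|H0 /\ R(t)| is at most the expected
   numerator of FDP_ADDIS(t), which is at most alpha E[|R(t)| v 1]: this is (a).
   For (b) the denominator |R(t)| v 1 depends on P_j.  Forcing the outcome of step j to
   (R, C, S) = (0, 0, 1) gives a history that, by monotonicity of the levels, has no more
   rejections than the true one when H_j is rejected, coincides with it on
   {lambda_j < P_j <= tau_j}, and depends only on the other p-values, hence is independent
   of P_j; the argument of (a) then applies on each of its finitely many atoms. *)

From HB Require Import structures.
From mathcomp Require Import all_boot all_order all_algebra.
From mathcomp Require Import all_classical all_reals all_analysis.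
From mathcomp Require Import ring lra measurable_realfun.
Import Order.TTheory GRing.Theory Num.Theory.
Local Open Scope classical_set_scope.
Local Open Scope ring_scope.
Set Implicit Arguments.
Unset Strict Implicit.
Unset Printing Implicit Defensive.

Section ConservativeCDF.
Variables (R : realFieldType) (F : R -> R).
Hypothesis F_mono : forall u v, 0 <= u -> u <= v -> v <= 1 -> F u <= F v.
Hypothesis F_ge0 : forall u, 0 <= u -> u <= 1 -> 0 <= F u.
Hypothesis F_cons : forall x s, 0 < x < 1 -> 0 < s < 1 -> F (s * x) <= x * F s.

Lemma le_of_forall_mul_le (c y z : R) : 0 <= c < 1 -> 0 <= y ->
  (forall s, c < s < 1 -> s * y <= z) -> y <= z.
Proof.
move=> /andP[c0 c1] y0 H; rewrite leNgt; apply/negP => zy.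
have yp : 0 < y.
  rewrite lt_def y0 andbT; apply/eqP => y00.
  have := H ((c + 1) / 2); rewrite y00 mulr0; lra.
pose m := Num.max c (z / y).
have m1 : m < 1 by rewrite /m gt_max c1 ltr_pdivrMr // mul1r.
have cm : c <= m by rewrite /m le_max lexx.
have zmy : z <= m * y by rewrite -ler_pdivrMr // /m le_max lexx orbT.
have : (m + 1) / 2 * y <= z by apply: H; lra.
nra.
Qed.

Lemma le0_of_forall_le_mul (y z : R) : 0 <= z ->
  (forall x, 0 < x < 1 -> y <= x * z) -> y <= 0.
Proof.
move=> z0 H; rewrite leNgt; apply/negP => y0.
have yz : 0 < 2 * (y + z) by lra.
have := H (y / (2 * (y + z))).
rewrite divr_gt0 // ltr_pdivrMr // mul1r => /(_ ltac:(lra)).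
rewrite mulrAC ler_pdivlMr //; nra.
Qed.

Lemma conservative_le_ratio u v : 0 <= u -> u <= v -> v <= 1 -> 0 < v ->
  F u <= (u / v) * F v.
Proof.
move=> u0 uv v1 v0.
have [->|u_neq0] := eqVneq u 0.
  (* [F 0 <= x F(1/2)] for every [x > 0] *)
  rewrite !mul0r; apply: (@le0_of_forall_le_mul _ (F (1/2))); first by apply: F_ge0; lra.
  move=> x /andP[x0 x1]; apply: le_trans (F_cons (x := x) (s := 1/2) _ _); last lra.
    by apply: F_mono; nra.
  by rewrite x0 x1.
have {u_neq0} up : 0 < u by rewrite lt_def u_neq0 u0.
have [->|uv'] := eqVneq u v; first by rewrite divff ?mul1r // gt_eqF.
have {}uv' : u < v by rewrite lt_def eq_sym uv' uv.
have [v1E|v_neq1] := eqVneq v 1.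
  subst v.
  (* the conservativeness inequality is only available for [s < 1] *)
  rewrite divr1; apply: (@le_of_forall_mul_le u); first by rewrite u0.
    by apply: F_ge0 => //; lra.
  move=> s /andP[us s1].
  have s0 : 0 < s by lra.
  have us1 : 0 < u / s < 1 by rewrite divr_gt0 //= ltr_pdivrMr // mul1r.
  have := F_cons us1 (_ : 0 < s < 1); rewrite mulrC divfK ?gt_eqF // s0 s1.
  move=> /(_ isT) Fu.
  have Fs1 : F s <= F 1 by apply: F_mono; lra.
  have Fs0 : 0 <= F s by apply: F_ge0; lra.
  rewrite -ler_pdivlMl // mulrA (mulrC _ u).
  by apply: le_trans Fu _; apply: ler_wpM2l => //; rewrite divr_ge0 // ltW.
have v1x : v < 1 by rewrite lt_def eq_sym v_neq1 v1.
have uv1 : 0 < u / v < 1 by rewrite divr_gt0 //= ltr_pdivrMr // mul1r.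
by have := F_cons uv1 (_ : 0 < v < 1); rewrite mulrC divfK ?gt_eqF // v0 v1x; apply.
Qed.

Lemma conservative_le_slice al la ta : 0 <= al -> al <= la -> la < ta -> ta <= 1 ->
  F al <= al / (ta - la) * (F ta - F la).
Proof.
move=> al0 alla lata ta1.
have ta0 : 0 < ta by lra.
have Fal := conservative_le_ratio al0 (le_trans alla (ltW lata)) ta1 ta0.
have Fla := conservative_le_ratio (le_trans al0 alla) (ltW lata) ta1 ta0.
have Fta0 : 0 <= F ta by apply: F_ge0; lra.
apply: le_trans Fal _.
have -> : al / ta * F ta = al / (ta - la) * ((1 - la / ta) * F ta).
  by field; rewrite !gt_eqF //; lra.
apply: ler_wpM2l; first by rewrite divr_ge0 // ltW // subr_gt0.
by rewrite mulrBl mul1r lerB.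
Qed.

End ConservativeCDF.

Notation outcome := (bool * bool * bool)%type.
Definition outcome0 : outcome := (false, false, false).

Section History.
Context {d : measure_display} {T : measurableType d} {R : realType}.
Variables (P : nat -> T -> R) (alpha lambda tau : nat -> hist -> R).

Local Notation step := (step P alpha lambda tau).
Local Notation history := (history P alpha lambda tau).

Fixpoint history_with (j : nat) (o : outcome) (t : nat) (w : T) : hist :=
  if t is t'.+1 then
    rcons (history_with j o t' w)
      (if t' == j then o else step t' (history_with j o t' w) w)
  else [::].

Lemma size_history_with j o t w : size (history_with j o t w) = t.
Proof. by elim: t => //= t IH; rewrite size_rcons IH. Qed.

Lemma history_with_before j o t w : (t <= j)%N -> history_with j o t w = history t w.
Proof.
elim: t => //= t IH tj; rewrite IH ?(ltnW tj) //.
by rewrite (_ : (t == j) = false) // ltn_eqF.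
Qed.

Lemma take_history_with j o t s w : (s <= t)%N ->
  take s (history_with j o t w) = history_with j o s w.
Proof.
elim: t => [|t IH]; first by rewrite leqn0 => /eqP ->.
rewrite leq_eqVlt => /orP[/eqP ->|]; first by rewrite take_oversize // size_history_with.
rewrite /= -cats1 take_cat size_history_with ltnS leq_eqVlt => /orP[/eqP ->|st].
  by rewrite ltnn subnn take0 cats0.
by rewrite st IH // ltnW.
Qed.

Lemma nth_history_with j o t s w : (s < t)%N ->
  nth outcome0 (history_with j o t w) s =
  if s == j then o else step s (history_with j o s w) w.
Proof.
elim: t => // t IH; rewrite /= nth_rcons size_history_with ltnS leq_eqVlt.
by case/orP => [/eqP ->|st]; rewrite ?ltnn ?eqxx // st IH.
Qed.

Lemma history_with_step j o t w : ((j < t)%N -> o = step j (history j w) w) ->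
  history_with j o t w = history t w.
Proof.
elim: t => //= t IH H; rewrite IH; last by move=> jt; apply: H; apply: ltnW.
by case: eqP => // tj; subst t; rewrite H.
Qed.

Lemma historyE t w : history t w = history_with t outcome0 t w.
Proof. by rewrite history_with_before. Qed.

Lemma size_history t w : size (history t w) = t.
Proof. by rewrite historyE size_history_with. Qed.

Lemma nth_history s t w : (s < t)%N ->
  nth outcome0 (history t w) s = step s (history s w) w.
Proof.
move=> st; rewrite historyE nth_history_with // ltn_eqF // history_with_before //.
exact: ltnW.
Qed.

Lemma take_history_with_at j o t w : (j <= t)%N ->
  take j (history_with j o t w) = history j w.
Proof. by move=> jt; rewrite take_history_with // history_with_before. Qed.

Definition consistent_set (s : nat) (k : hist) : set R :=
  [set x | (x <= alpha s (take s k), x <= lambda s (take s k), x <= tau s (take s k))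
           = nth outcome0 k s].

Lemma history_with_eqP j o t w (k : hist) : size k = t ->
  history_with j o t w = k <->
  ((j < t)%N ==> (nth outcome0 k j == o)) /\
  (forall s, (s < t)%N -> s != j -> consistent_set s k (P s w)).
Proof.
move=> sk; split.
  move=> <-; split; first by apply/implyP => jt; rewrite nth_history_with // eqxx.
  move=> s st sj; rewrite /consistent_set /= take_history_with ?(ltnW st) //.
  by rewrite nth_history_with // (negbTE sj).
case=> /implyP Hj Hs.
suff H u : (u <= t)%N -> history_with j o u w = take u k.
  by rewrite H // -sk take_size.
elim: u => [|u IH] ut /=; first by rewrite take0.
rewrite IH ?(ltnW ut) // (take_nth outcome0) ?sk //.
congr rcons; case: eqP => [uj|/eqP uj]; first by subst u; rewrite (eqP (Hj ut)).
by have := Hs u ut uj; rewrite /consistent_set /=.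
Qed.

Definition rect_except j t k : set T :=
  \bigcap_(s in [set s | (s < t)%N && (s != j)]) (P s @^-1` consistent_set s k).

Lemma history_with_preimage j o t k : size k = t ->
  [set w | history_with j o t w = k] =
  if (j < t)%N ==> (nth outcome0 k j == o) then rect_except j t k else set0.
Proof.
move=> sk; apply/seteqP; split => w /=.
  by move/(history_with_eqP _ _ _ sk) => [-> H] /= s /andP[st sj]; exact: H.
case: ifP => // c H; apply/(history_with_eqP _ _ _ sk); split => // s st sj.
by apply: H; rewrite /= st sj.
Qed.

Lemma measurable_ler_eq (a : R) (b : bool) : measurable [set x : R | (x <= a) = b].
Proof.
case: b.
  rewrite (_ : [set x | _] = `]-oo, a]%classic); first exact: measurable_itv.
  by apply/seteqP; split => x /=; rewrite in_itv.
rewrite (_ : [set x | _] = `]a, +oo[%classic); first exact: measurable_itv.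
apply/seteqP; split => x /=; rewrite in_itv /= andbT ltNge; first by move=> ->.
by move/negbTE.
Qed.

Lemma measurable_consistent_set s k : measurable (consistent_set s k).
Proof.
rewrite /consistent_set; case: (nth outcome0 k s) => [[r c] sv].
rewrite (_ : [set x | _] =
  [set x | (x <= alpha s (take s k)) = r] `&` [set x | (x <= lambda s (take s k)) = c]
   `&` [set x | (x <= tau s (take s k)) = sv]).
  by apply: measurableI; [apply: measurableI|]; exact: measurable_ler_eq.
by apply/seteqP; split => x /=; [case=> -> -> -> | case=> [[-> ->] ->]].
Qed.

Hypothesis mP : forall j, measurable_fun setT (P j).

Lemma measurable_rect_except j t k : measurable (rect_except j t k).
Proof.
apply: bigcap_measurableType => s _; rewrite -[X in measurable X]setTI.
exact: mP (measurable_consistent_set _ _).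
Qed.

Lemma measurable_history_with j o t k : measurable [set w | history_with j o t w = k].
Proof.
have [sk|sk] := eqVneq (size k) t.
  by rewrite history_with_preimage //; case: ifP => // _; exact: measurable_rect_except.
rewrite (_ : [set w | _] = set0) //; apply/seteqP; split => // w /= hk.
by move: sk; rewrite -hk size_history_with eqxx.
Qed.

Lemma measurable_history t k : measurable [set w | history t w = k].
Proof.
rewrite (_ : [set w | _] = [set w | history_with t outcome0 t w = k]).
  exact: measurable_history_with.
by apply/seteqP; split => w /=; rewrite historyE.
Qed.

End History.

Definition outcome_le (x y : outcome) : bool :=
  let: (r, c, s) := x in let: (r', c', s') := y in [&& r ==> r', c ==> c' & s' ==> s].

Definition outcome_rejected : outcome := (true, true, true).
Definition outcome_selected : outcome := (false, false, true).

Lemma hist_le_rcons g g' x x' : hist_le g g' -> outcome_le x x' ->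
  hist_le (rcons g x) (rcons g' x').
Proof.
case=> sg H xx'; split; first by rewrite !size_rcons sg.
move=> i; rewrite size_rcons ltnS leq_eqVlt => /orP[/eqP ->|ig].
  by rewrite !nth_rcons sg ltnn eqxx; case: x xx' => [[? ?] ?]; case: x' => [[? ?] ?].
by rewrite !nth_rcons -sg ig; apply: H.
Qed.

Definition rej_count (h : hist) : nat :=
  \sum_(0 <= i < size h) (nth outcome0 h i).1.1.

Lemma rej_count_le g g' : hist_le g g' -> (rej_count g <= rej_count g')%N.
Proof.
case=> sg H; rewrite /rej_count -sg !big_nat; apply: leq_sum => i /andP[_ ig].
have := H i ig; case: (nth outcome0 g i) => [[r c] s].
by case: (nth outcome0 g' i) => [[r' c'] s'] /=; case: r; case: r'; rewrite ?andbF.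
Qed.

Section Monotone.
Context {d : measure_display} {T : measurableType d} {R : realType}.
Variables (P : nat -> T -> R) (alpha lambda tau : nat -> hist -> R).

Local Notation step := (step P alpha lambda tau).
Local Notation history := (history P alpha lambda tau).
Local Notation history_with := (history_with P alpha lambda tau).

Lemma num_rej_rej_count t w : num_rej P alpha lambda tau t w = rej_count (history t w).
Proof.
rewrite /num_rej /rej_count size_history big_mkord; apply: eq_bigr => i _.
by rewrite nth_history.
Qed.

Lemma step_rejected j w :
  alpha_at P alpha lambda tau j w <= lambda_at P alpha lambda tau j w
    < tau_at P alpha lambda tau j w ->
  rej P alpha lambda tau j w -> step j (history j w) w = outcome_rejected.
Proof.
rewrite /rej /alpha_at /lambda_at /tau_at /step => /andP[al lt] H.
by rewrite H (le_trans H al) (le_trans H (le_trans al (ltW lt))).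
Qed.

Lemma step_selected j w :
  alpha_at P alpha lambda tau j w <= lambda_at P alpha lambda tau j w ->
  lambda_at P alpha lambda tau j w < P j w <= tau_at P alpha lambda tau j w ->
  step j (history j w) w = outcome_selected.
Proof.
rewrite /alpha_at /lambda_at /tau_at /step => al /andP[lP Pt].
by rewrite Pt !leNgt lP (le_lt_trans al lP).
Qed.

Lemma history_with_selected j t w :
  alpha_at P alpha lambda tau j w <= lambda_at P alpha lambda tau j w ->
  lambda_at P alpha lambda tau j w < P j w <= tau_at P alpha lambda tau j w ->
  history_with j outcome_selected t w = history t w.
Proof. by move=> al sel; apply: history_with_step => _; rewrite step_selected. Qed.

Hypotheses (alpha_mono : monotone_past alpha) (lambda_mono : monotone_past lambda)
  (tau_anti : monotone_past (fun t h => 1 - tau t h)).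

Lemma step_mono t h h' w : size h = t -> hist_le h h' -> outcome_le (step t h w) (step t h' w).
Proof.
move=> sh hh'; have := alpha_mono sh hh'; have := lambda_mono sh hh'.
have := tau_anti sh hh'; rewrite /step /= => t_le l_le a_le.
apply/and3P; split; apply/implyP => H; apply: le_trans H _ => //; lra.
Qed.

Lemma history_with_mono j o o' t w : outcome_le o o' ->
  hist_le (history_with j o t w) (history_with j o' t w).
Proof.
move=> oo'; elim: t => [|t IH] /=; first by [].
apply: hist_le_rcons => //; case: eqP => // _.
exact: step_mono (size_history_with _ _ _ _ _ _ _ _) IH.
Qed.

Lemma rej_count_selected_le j t w :
  alpha_at P alpha lambda tau j w <= lambda_at P alpha lambda tau j w
    < tau_at P alpha lambda tau j w ->
  rej P alpha lambda tau j w ->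
  (rej_count (history_with j outcome_selected t w) <= rej_count (history t w))%N.
Proof.
move=> order r; rewrite -(@history_with_step _ _ _ _ _ _ _ j outcome_rejected);
  last by move=> _; rewrite step_rejected.
exact/rej_count_le/history_with_mono.
Qed.

End Monotone.


Section Expectation.
Context {d : measure_display} {T : measurableType d} {R : realType}.
Variable Pr : probability T R.

Definition pr (E : set T) : R := fine (Pr E).

Lemma prE E : measurable E -> Pr E = (pr E)%:E.
Proof. by move=> mE; rewrite /pr fineK // fin_num_measure. Qed.

Lemma pr_ge0 E : 0 <= pr E.
Proof. by rewrite /pr fine_ge0. Qed.

Lemma pr0 : pr set0 = 0.
Proof. by rewrite /pr measure0. Qed.

Lemma pr_le (A B : set T) : measurable A -> measurable B -> A `<=` B -> pr A <= pr B.
Proof. by move=> mA mB AB; rewrite -lee_fin -!prE //; apply: le_measure; rewrite ?inE. Qed.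

Lemma prU (A B : set T) : measurable A -> measurable B -> A `&` B = set0 ->
  pr (A `|` B) = pr A + pr B.
Proof.
move=> mA mB AB; apply: EFin_inj; rewrite EFinD -!prE //; last exact: measurableU.
exact: measureU.
Qed.

Lemma ge0_expectation_sum I (s : seq I) (Q : pred I) (f : I -> T -> R) :
  (forall i, measurable_fun setT (f i)) -> (forall i w, 0 <= f i w) ->
  ('E_Pr[fun w => (\sum_(i <- s | Q i) f i w)%R] = \sum_(i <- s | Q i) 'E_Pr[f i])%E.
Proof.
move=> mf f0; rewrite unlock.
under eq_integral do rewrite -sumEFin big_mkcond.
rewrite ge0_integral_sum //; last first.
- by move=> i x _; case: (Q i) => //; rewrite lee_fin.
- by move=> i; case: (Q i); [exact/measurable_EFinP/mf | exact: measurable_cst].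
rewrite [RHS]big_mkcond; apply: eq_bigr => i _; case: (Q i) => //.
by rewrite integral0.
Qed.

Lemma expectation_indic_sum I (s : seq I) (c : I -> R) (E : I -> set T) :
  (forall i, 0 <= c i) -> (forall i, measurable (E i)) ->
  ('E_Pr[fun w => (\sum_(i <- s) c i * \1_(E i) w)%R] = (\sum_(i <- s) c i * pr (E i))%:E)%E.
Proof.
move=> c0 mE; rewrite ge0_expectation_sum; first last.
- by move=> i w; rewrite mulr_ge0 // indicE; case: (_ \in _).
- by move=> i; apply: measurable_funM => //; exact: measurable_indic.
rewrite -sumEFin; apply: eq_bigr => i _; rewrite unlock.
under eq_integral do rewrite EFinM.
rewrite ge0_integralZl_EFin //; last exact/measurable_EFinP/measurable_indic.
by rewrite integral_indic // setIT /pr EFinM fineK ?fin_num_measure.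
Qed.

(* Random variables that depend on [w] only through a history of length [t] are simple:
   they are sums over the finitely many atoms [[set w | X w = k]]. *)
Section Atoms.
Variables (t : nat) (X : T -> hist).
Hypotheses (size_X : forall w, size (X w) = t)
  (measurable_X : forall k, measurable [set w | X w = k]).

Lemma sum_atoms (c : hist -> R) (Y : hist -> set T) w :
  c (X w) * \1_(Y (X w)) w =
  \sum_(k : t.-tuple outcome) c k * \1_(Y k `&` [set w' | X w' = k]) w.
Proof.
pose k0 : t.-tuple outcome := Tuple (introT eqP (size_X w)).
rewrite (bigD1 k0) //= big1 ?addr0.
  by rewrite indicI mulrA [X in _ = _ * X]indicE mem_set // mulr1.
move=> k kk0; rewrite indicE memNset ?mulr0 //= => [[_ Xk]].
by move/eqP: kk0; apply; apply: val_inj; rewrite /= -Xk.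
Qed.

Lemma measurable_fun_atoms (c : hist -> R) (Y : hist -> set T) :
  (forall k, measurable (Y k)) -> measurable_fun setT (fun w => c (X w) * \1_(Y (X w)) w).
Proof.
move=> mY; rewrite (_ : (fun w => _) = fun w => \sum_(k : t.-tuple outcome)
          c k * \1_(Y k `&` [set w' | X w' = k]) w); last by apply/funext => w; exact: sum_atoms.
apply: measurable_sum => k; apply: measurable_funM => //.
exact/measurable_indic/measurableI.
Qed.

Lemma measurable_fun_comp_atoms (F : hist -> R) : measurable_fun setT (fun w => F (X w)).
Proof.
rewrite (_ : (fun w => _) = fun w => F (X w) * \1_((fun _ => setT) (X w)) w).
  exact: (@measurable_fun_atoms F (fun _ => setT) (fun _ => measurableT)).
by apply/funext => w; rewrite indicE mem_set // mulr1.
Qed.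

Lemma expectation_atoms (c : hist -> R) (Y : hist -> set T) :
  (forall w, 0 <= c (X w)) -> (forall k, measurable (Y k)) ->
  ('E_Pr[fun w => (c (X w) * \1_(Y (X w)) w)%R] =
   (\sum_(k : t.-tuple outcome) c k * pr (Y k `&` [set w | X w = k]))%:E)%E.
Proof.
move=> c0 mY.
(* [c] may be negative outside the range of [X], where the atoms are empty *)
pose c' k := if pselect (exists w, X w = k) is left _ then c k else 0.
have c'0 k : 0 <= c' k by rewrite /c'; case: pselect => // -[w <-].
have cc' w : c (X w) = c' (X w) by rewrite /c'; case: pselect => // -[]; exists w.
rewrite (_ : (fun w => _) = fun w => \sum_(k : t.-tuple outcome)
          c' k * \1_(Y k `&` [set w' | X w' = k]) w); last first.
  by apply/funext => w; rewrite cc'; exact: sum_atoms.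
rewrite expectation_indic_sum //; last by move=> k; exact: measurableI.
congr (_%:E); apply: eq_bigr => k _; rewrite /c'; case: pselect => // nk.
rewrite (_ : _ `&` _ = set0) ?pr0 ?mulr0 //.
by apply/seteqP; split => // w [_ /= Xk]; apply: nk; exists w.
Qed.

Lemma expectation_comp_atoms (F : hist -> R) : (forall w, 0 <= F (X w)) ->
  ('E_Pr[fun w => F (X w)] = (\sum_(k : t.-tuple outcome) F k * pr [set w | X w = k])%:E)%E.
Proof.
move=> F0; rewrite (_ : (fun w => _) = fun w => F (X w) * \1_((fun _ => setT) (X w)) w).
  rewrite (@expectation_atoms F (fun _ => setT)) //.
  by under eq_bigr do rewrite setTI.
by apply/funext => w; rewrite indicE mem_set // mulr1.
Qed.

Lemma pr_atoms (E : set T) : measurable E ->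
  pr E = \sum_(k : t.-tuple outcome) pr (E `&` [set w | X w = k]).
Proof.
move=> mE; have := @expectation_atoms (fun _ => 1) (fun _ => E) (fun _ => ler01) (fun _ => mE).
rewrite (_ : (fun w => _) = fun w => \sum_(i <- [:: tt]) 1 * \1_E w); last first.
  by apply/funext => w; rewrite big_seq1.
rewrite expectation_indic_sum // big_seq1 mul1r => -[->].
by under eq_bigr do rewrite mul1r.
Qed.

End Atoms.

End Expectation.

Section PValueEvents.
Context {d : measure_display} {T : measurableType d} {R : realType}.
Variables (Pr : probability T R) (P : nat -> T -> R).
Hypothesis mP : forall j, measurable_fun setT (P j).

Local Notation pr := (pr Pr).

Lemma measurable_P_le j c : measurable [set w | P j w <= c].
Proof. by have := mP j measurableT (measurable_ler_eq c true); rewrite setTI. Qed.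

Lemma measurable_P_slice j l u : measurable [set w | l < P j w <= u].
Proof.
rewrite (_ : [set w | _] = [set w | P j w <= u] `&` ~` [set w | P j w <= l]).
  by apply: measurableI; [|apply: measurableC]; exact: measurable_P_le.
by apply/seteqP; split => w /=; rewrite ltNge; [case/andP => /negP ? ->|case=> -> /negP ->].
Qed.

Lemma pr_slice j l u (E : set T) : measurable E -> l <= u ->
  pr ([set w | P j w <= u] `&` E) - pr ([set w | P j w <= l] `&` E) =
  pr ([set w | l < P j w <= u] `&` E).
Proof.
move=> mE lu.
rewrite (_ : [set w | P j w <= u] `&` E =
   ([set w | P j w <= l] `&` E) `|` ([set w | l < P j w <= u] `&` E)).
  rewrite prU; first by rewrite addrC addKr.
  - by apply: measurableI => //; exact: measurable_P_le.
  - by apply: measurableI => //; exact: measurable_P_slice.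
  apply/seteqP; split => w //= [[h1 _] [/andP[h2 _] _]].
  by move: h2; rewrite ltNge h1.
apply/seteqP; split => w /=.
  case=> h1 h2; case: (boolP (P j w <= l)) => h3; [left|right]; first by [].
  by rewrite -ltNge in h3; rewrite h3 h1.
by case=> [[h1 h2]|[/andP[h1 h3] h2]]; split => //; apply: le_trans h1 lu.
Qed.

Lemma pr_le_slice j (E : set T) : measurable E ->
  (forall x s, 0 < x < 1 -> 0 < s < 1 ->
     pr ([set w | P j w <= s * x] `&` E) <= x * pr ([set w | P j w <= s] `&` E)) ->
  forall al la ta, 0 <= al -> al <= la -> la < ta -> ta <= 1 ->
  pr ([set w | P j w <= al] `&` E) <=
  al / (ta - la) * pr ([set w | la < P j w <= ta] `&` E).
Proof.
move=> mE Econs al la ta al0 alla lata ta1.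
rewrite -pr_slice //; last exact: ltW.
apply: (conservative_le_slice (F := fun u => pr ([set w | P j w <= u] `&` E))) => //.
  move=> u v u0 uv v1; apply: pr_le; try (apply: measurableI => //; exact: measurable_P_le).
  by move=> w /= [h1 h2]; split => //; apply: le_trans h1 uv.
by move=> u _ _; exact: pr_ge0.
Qed.

End PValueEvents.

Section ADDIS.
Context {d : measure_display} {T : measurableType d} {R : realType}.
Variables (Pr : probability T R) (P : nat -> T -> R) (null : nat -> bool)
  (alpha lambda tau : nat -> hist -> R).
Hypothesis mP : forall j, measurable_fun setT (P j).
Hypothesis levels01 : forall t h, size h = t ->
  [/\ 0 <= alpha t h <= 1, 0 <= lambda t h <= 1 & 0 <= tau t h <= 1].
Hypothesis levels_order : forall j w,
  alpha_at P alpha lambda tau j w <= lambda_at P alpha lambda tau j w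
    < tau_at P alpha lambda tau j w.
Hypothesis conservative : cond_unif_conservative P alpha lambda tau Pr null.
Variable a : R.
Hypothesis a_gt0 : 0 < a.
Hypothesis FDP_ADDIS_le : forall t, {ae Pr, forall w, FDP_ADDIS P alpha lambda tau t w <= a}.

Local Notation history := (history P alpha lambda tau).
Local Notation rej := (rej P alpha lambda tau).
Local Notation pr := (pr Pr).

Definition gain_coef j (g : hist) := alpha j g / (tau j g - lambda j g).
Definition rej_set j (g : hist) := [set w | P j w <= alpha j g].
Definition slice_set j (g : hist) := [set w | lambda j g < P j w <= tau j g].

Definition gain j w := alpha_at P alpha lambda tau j w *
  ((if (lambda_at P alpha lambda tau j w < P j w) && (P j w <= tau_at P alpha lambda tau j w)
    then 1 else 0) / (tau_at P alpha lambda tau j w - lambda_at P alpha lambda tau j w)).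

Definition denom (h : hist) : R := (maxn (rej_count h) 1)%:R.

Lemma denom_ge1 h : 1 <= denom h.
Proof. by rewrite /denom ler1n leq_maxr. Qed.

Lemma denom_gt0 h : 0 < denom h.
Proof. exact: lt_le_trans ltr01 (denom_ge1 h). Qed.

Lemma FDP_ADDISE t w :
  FDP_ADDIS P alpha lambda tau t w = (\sum_(j < t) gain j w) / denom (history t w).
Proof. by rewrite /FDP_ADDIS num_rej_rej_count. Qed.

Lemma gainE j :
  gain j = fun w => gain_coef j (history j w) * \1_(slice_set j (history j w)) w.
Proof.
apply/funext => w; rewrite /gain /gain_coef /slice_set indicE /alpha_at /lambda_at /tau_at.
case: ifP => h; first by rewrite mem_set // mulr1 mul1r.
by rewrite memNset ?mul0r ?mulr0 //= => Hs; move: h; rewrite Hs.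
Qed.

Lemma rejE j :
  (fun w => (rej j w)%:R : R) = fun w => 1 * \1_(rej_set j (history j w)) w.
Proof.
apply/funext => w; rewrite /rej /rej_set indicE mul1r /alpha_at.
by case: (boolP (P j w <= _)) => h; [rewrite mem_set | rewrite memNset //= => Hs; move: h; rewrite Hs].
Qed.

Lemma gain_coef_ge0 j w : 0 <= gain_coef j (history j w).
Proof.
have := levels_order j w; case: (levels01 (size_history P alpha lambda tau j w)).
move=> /andP[a0 _] _ _ /andP[_ lt]; rewrite /gain_coef divr_ge0 // subr_ge0 ltW //.
Qed.

Lemma gain_ge0 j w : 0 <= gain j w.
Proof. by rewrite gainE /= mulr_ge0 ?gain_coef_ge0 // indicE; case: (_ \in _). Qed.

Let measurable_atom t k : measurable [set w | history t w = k].
Proof. exact: measurable_history. Qed.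

Lemma measurable_gain j : measurable_fun setT (gain j).
Proof.
rewrite gainE.
apply: (measurable_fun_atoms (size_history P alpha lambda tau j) (measurable_atom j))
  => k.
exact: measurable_P_slice.
Qed.

Lemma measurable_rej j : measurable_fun setT (fun w => (rej j w)%:R : R).
Proof.
rewrite rejE.
apply: (measurable_fun_atoms (size_history P alpha lambda tau j) (measurable_atom j)
  (fun _ => 1)) => k.
exact: measurable_P_le.
Qed.

Lemma expectation_rej_le_gain j : null j ->
  ('E_Pr[fun w => (rej j w)%:R : R] <= 'E_Pr[gain j])%E.
Proof.
move=> nj.
rewrite gainE.
rewrite rejE.
have sizeX w := size_history P alpha lambda tau j w.
rewrite (expectation_atoms Pr sizeX (measurable_atom j) (c := fun _ => 1)) //; last first.
  by move=> k; exact: measurable_P_le.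
rewrite (expectation_atoms Pr sizeX (measurable_atom j)); [|exact: gain_coef_ge0|].
2: by move=> k; exact: measurable_P_slice.
rewrite lee_fin; apply: ler_sum => g _.
case: (pselect (exists w, history j w = g)) => [[w0 hw]|nw]; last first.
  rewrite (_ : [set w | history j w = g] = set0) ?setI0 ?pr0 ?mulr0 //.
  by apply/seteqP; split => // w /= hw; apply: nw; exists w.
have sg : size g = j by rewrite size_tuple.
case: (levels01 sg) => /andP[a0 _] _ /andP[_ t1].
have := levels_order j w0; rewrite /alpha_at /lambda_at /tau_at hw => /andP[al lt].
rewrite mul1r; apply: (pr_le_slice mP) => //.
move=> x s hx hs; rewrite -lee_fin EFinM -!prE; first exact: conservative.
all: by apply: measurableI; [exact: measurable_P_le | exact: measurable_atom].
Qed.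

Lemma mFDR_le t : mFDR P alpha lambda tau Pr null t <= a.
Proof.
have sizeX w := size_history P alpha lambda tau t w.
have mX k := measurable_atom t k.
have ED := expectation_comp_atoms Pr sizeX mX (F := denom) (fun w => ltW (denom_gt0 _)).
set sD := \sum_(k : t.-tuple outcome) _ in ED.
have sD_ge1 : 1 <= sD.
  have -> : 1 = pr setT by rewrite /pr probability_setT.
  rewrite (pr_atoms Pr sizeX mX measurableT).
  apply: ler_sum => k _; rewrite setTI -[X in X <= _]mul1r.
  by apply: ler_wpM2r; [exact: pr_ge0 | exact: denom_ge1].
have EaD : ('E_Pr[fun w => (a * denom (history t w))%R] = (a * sD)%:E)%E.
  rewrite (expectation_comp_atoms Pr sizeX mX (F := fun h => a * denom h)).
    by rewrite /sD mulr_sumr; congr (_%:E); apply: eq_bigr => k _; rewrite mulrA.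
  by move=> w; rewrite mulr_ge0 // ltW // denom_gt0.
have EV_le : ('E_Pr[fun w => (num_false_rej P alpha lambda tau null t w)%:R : R]
             <= (a * sD)%:E)%E.
  rewrite -EaD (_ : (fun w => _) = fun w => (\sum_(j < t | null j) (rej j w)%:R)%R); last first.
    by apply/funext => w; rewrite /num_false_rej natr_sum.
  rewrite ge0_expectation_sum //; last exact: measurable_rej.
  apply: (@le_trans _ _ (\sum_(j < t | null j) 'E_Pr[gain j])%E).
    by apply: lee_sum => j nj; exact: expectation_rej_le_gain.
  apply: (@le_trans _ _ (\sum_(j < t) 'E_Pr[gain j])%E).
    apply: (@lee_sum_nneg_subset _ _ _ predT) => // j _.
    by apply: expectation_ge0 => w; exact: gain_ge0.
  rewrite -ge0_expectation_sum //; [|exact: measurable_gain|exact: gain_ge0].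
  apply: expectation_le => //.
  - by apply: measurable_sum => j; exact: measurable_gain.
  - exact: (measurable_fun_comp_atoms sizeX mX (fun h => a * denom h)).
  - by move=> w; apply: sumr_ge0 => j _; exact: gain_ge0.
  - by move=> w; rewrite mulr_ge0 // ltW // denom_gt0.
  apply: filterS (FDP_ADDIS_le t) => w /=.
  by rewrite FDP_ADDISE ler_pdivrMr ?denom_gt0 // mulrC.
have EV_ge0 : (0 <= 'E_Pr[fun w => (num_false_rej P alpha lambda tau null t w)%:R : R])%E.
  exact: expectation_ge0.
have denomE : (fun w => (maxn (num_rej P alpha lambda tau t w) 1)%:R : R) =
               fun w => denom (history t w).
  by apply/funext => w; rewrite num_rej_rej_count.
rewrite /mFDR denomE ED /= ler_pdivrMr; last exact: lt_le_trans ltr01 sD_ge1.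
rewrite -lee_fin fineK // ge0_fin_numE //.
exact: le_lt_trans EV_le (ltry _).
Qed.


Hypothesis indep : nulls_independent P Pr null.

Lemma pr_indep_rect_except j t k (B : set R) : null j -> measurable B ->
  pr (P j @^-1` B `&` rect_except P alpha lambda tau j t k) =
  pr (P j @^-1` B) * pr (rect_except P alpha lambda tau j t k).
Proof.
move=> nj mB.
have mPB : measurable (P j @^-1` B) by have := mP j measurableT mB; rewrite setTI.
have mR := measurable_rect_except alpha lambda tau mP j t k.
apply: EFin_inj; rewrite EFinM -!prE //; last exact: measurableI.
pose Ns := [seq s <- iota 0 t | null s && (s != j)].
pose Ms := [seq s <- iota 0 t | ~~ null s].
pose Bf s := if s == j then B else consistent_set alpha lambda tau s k.
have mBf s : measurable (Bf s).
  by rewrite /Bf; case: eqP => // _; exact: measurable_consistent_set.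
have memNM s : (s \in Ns ++ Ms) = (s < t)%N && (s != j).
  rewrite mem_cat !mem_filter mem_iota /=.
  case: (eqVneq s j) => [->|sj]; first by rewrite nj /= !andbF.
  by case: (null s); rewrite /= add0n ?andbT ?orbF.
have uNs : uniq Ns by apply: filter_uniq; exact: iota_uniq.
have aNs : all null Ns by apply/allP => s; rewrite mem_filter => /andP[/andP[]].
have aMs : all (fun k => ~~ null k) Ms by apply/allP => s; rewrite mem_filter => /andP[].
have uNsj : uniq (j :: Ns) by rewrite /= uNs andbT mem_filter eqxx andbF.
have rectE : \bigcap_(s in [set s | s \in Ns ++ Ms]) (P s @^-1` Bf s) =
             rect_except P alpha lambda tau j t k.
  apply/seteqP; split => w /= H s /=; rewrite ?memNM => hs; have := H s;
    by rewrite /= ?memNM hs /Bf; case/andP: hs => _ /negbTE -> /(_ isT).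
have rectjE : \bigcap_(s in [set s | s \in (j :: Ns) ++ Ms]) (P s @^-1` Bf s) =
              P j @^-1` B `&` rect_except P alpha lambda tau j t k.
  rewrite -rectE; apply/seteqP; split => w /= H.
    split; first by have := H j; rewrite /= inE eqxx /Bf eqxx => /(_ isT).
    by move=> s /= hs; apply: H; rewrite /= inE hs orbT.
  case: H => Hj H s /=; rewrite inE => /orP[/eqP ->|hs]; last exact: H.
  by rewrite /Bf eqxx.
rewrite -rectjE (indep uNsj _ aMs mBf) /= ?nj ?aNs // big_cons /Bf eqxx -/Bf.
by rewrite -muleA -(indep uNs aNs aMs mBf) rectE.
Qed.

Lemma pr_rej_le_slice j al la ta : null j ->
  0 <= al -> al <= la -> la < ta -> ta <= 1 ->
  pr [set w | P j w <= al] <= al / (ta - la) * pr [set w | la < P j w <= ta].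
Proof.
move=> nj al0 alla lata ta1.
have sizeX w := size_history P alpha lambda tau j w.
rewrite -[[set w | P j w <= al]]setIT -[[set w | la < P j w <= ta]]setIT.
apply: (pr_le_slice mP measurableT) => // x s hx hs; rewrite !setIT.
rewrite !(pr_atoms Pr sizeX (measurable_atom j) (measurable_P_le mP _ _)) mulr_sumr.
apply: ler_sum => g _; rewrite -lee_fin EFinM -!prE; first exact: conservative (size_tuple g) _ _ hx hs.
all: by apply: measurableI; [exact: measurable_P_le | exact: measurable_atom].
Qed.

Hypotheses (alpha_mono : monotone_past alpha) (lambda_mono : monotone_past lambda)
  (tau_anti : monotone_past (fun t h => 1 - tau t h)).

Local Notation history_sel j t := (history_with P alpha lambda tau j outcome_selected t).

Lemma rej_div_denom_le j t w : (j < t)%N ->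
  (rej j w)%:R / denom (history t w) <=
  1 / denom (history_sel j t w) * \1_(rej_set j (take j (history_sel j t w))) w.
Proof.
move=> jt; rewrite take_history_with_at ?(ltnW jt) // indicE.
case: (boolP (rej j w)) => r; last first.
  by rewrite mul0r mulr_ge0 ?divr_ge0 ?ler0n ?ltW ?denom_gt0.
rewrite mem_set // mulr1 !div1r lef_pV2 ?posrE ?denom_gt0 // ler_nat.
rewrite geq_max leq_maxr andbT (leq_trans _ (leq_maxl _ _)) //.
exact: rej_count_selected_le.
Qed.

Lemma gain_div_denomE j t w : (j < t)%N ->
  gain j w / denom (history t w) =
  gain_coef j (take j (history_sel j t w)) / denom (history_sel j t w) *
    \1_(slice_set j (take j (history_sel j t w))) w.
Proof.
move=> jt; rewrite take_history_with_at ?(ltnW jt) // gainE /= !indicE.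
case: (boolP (w \in _)) => [/set_mem sel|_]; last by rewrite !mulr0 mul0r.
have [al _] := andP (levels_order j w).
by rewrite mulr1 mulr1 history_with_selected.
Qed.

Lemma pr_rej_atom_le j t (k : t.-tuple outcome) : (j < t)%N -> null j ->
  1 / denom k * pr (rej_set j (take j k) `&` [set w | history_sel j t w = k]) <=
  gain_coef j (take j k) / denom k *
    pr (slice_set j (take j k) `&` [set w | history_sel j t w = k]).
Proof.
move=> jt nj.
case: (pselect (exists w, history_sel j t w = k)) => [[w0 hw0]|nw]; last first.
  rewrite (_ : [set w | _] = set0) ?setI0 ?pr0 ?mulr0 //.
  by apply/seteqP; split => // w /= hw; apply: nw; exists w.
have tk : take j k = history j w0 by rewrite -hw0 take_history_with_at // ltnW.
have sj : size (take j k) = j by rewrite size_takel // size_tuple ltnW.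
case: (levels01 sj) => /andP[a0 _] _ /andP[_ t1].
have := levels_order j w0; rewrite /alpha_at /lambda_at /tau_at -tk => /andP[al lt].
rewrite history_with_preimage ?size_tuple //; case: ifP => _; last first.
  by rewrite !setI0 pr0 !mulr0.
rewrite (pr_indep_rect_except _ _ nj (measurable_ler_eq _ true)).
rewrite (pr_indep_rect_except _ _ nj (measurable_itv `]_, _])).
rewrite !mulrA ler_wpM2r ?pr_ge0 // div1r mulrAC [leRHS]mulrC ler_wpM2l //.
  by rewrite invr_ge0 ltW ?denom_gt0.
exact: pr_rej_le_slice.
Qed.

Lemma measurable_rej_div_denom j t : (j < t)%N ->
  measurable_fun setT (fun w => (rej j w)%:R / denom (history t w)).
Proof.
move=> jt; pose F h := ((nth outcome0 h j).1.1)%:R / denom h.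
rewrite (_ : (fun w => _) = fun w => F (history t w)).
  exact: measurable_fun_comp_atoms (size_history _ _ _ _ t) (measurable_atom t) F.
by apply/funext => w; rewrite /F nth_history.
Qed.

Lemma measurable_gain_div_denom j t :
  measurable_fun setT (fun w => gain j w / denom (history t w)).
Proof.
apply: measurable_funM; first exact: measurable_gain.
exact: measurable_fun_comp_atoms (size_history _ _ _ _ t) (measurable_atom t)
  (fun h => (denom h)^-1).
Qed.

Lemma gain_div_denom_ge0 j t w : 0 <= gain j w / denom (history t w).
Proof. by rewrite divr_ge0 ?gain_ge0 // ltW ?denom_gt0. Qed.

Lemma expectation_rej_div_denom_le j t : (j < t)%N -> null j ->
  ('E_Pr[fun w => ((rej j w)%:R / denom (history t w))%R] <=
   'E_Pr[fun w => (gain j w / denom (history t w))%R])%E.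
Proof.
move=> jt nj.
have sizeK w : size (history_sel j t w) = t := size_history_with _ _ _ _ _ _ _ _.
have mK k := measurable_history_with alpha lambda tau mP j outcome_selected t k.
have rej_setK k := measurable_P_le mP j (alpha j (take j k)).
have slice_setK k := measurable_P_slice mP j (lambda j (take j k)) (tau j (take j k)).
have coefK w : 0 <= 1 / denom (history_sel j t w) by rewrite div1r invr_ge0 ltW ?denom_gt0.
apply: (@le_trans _ _ ('E_Pr[fun w => (1 / denom (history_sel j t w) *
    \1_(rej_set j (take j (history_sel j t w))) w)%R])%E).
  apply: expectation_le => //.
  - exact: measurable_rej_div_denom.
  - exact: (@measurable_fun_atoms _ _ _ _ _ sizeK mK (fun k => 1 / denom k)
      (fun k => rej_set j (take j k)) rej_setK).
  - by move=> w; rewrite divr_ge0 ?ler0n // ltW ?denom_gt0.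
  - by move=> w; rewrite mulr_ge0 // indicE ler0n.
  by apply: aeW => w; exact: rej_div_denom_le.
have gainK : (fun w => (gain j w / denom (history t w))%R) = fun w =>
    gain_coef j (take j (history_sel j t w)) / denom (history_sel j t w) *
    \1_(slice_set j (take j (history_sel j t w))) w.
  by apply/funext => w; rewrite gain_div_denomE.
have gain_coefK w : 0 <= gain_coef j (take j (history_sel j t w)) / denom (history_sel j t w).
  by rewrite take_history_with_at ?(ltnW jt) // divr_ge0 ?gain_coef_ge0 // ltW ?denom_gt0.
rewrite gainK (expectation_atoms Pr sizeK mK (c := fun k => 1 / denom k)
  (Y := fun k => rej_set j (take j k))) //.
rewrite (expectation_atoms Pr sizeK mK (c := fun k => gain_coef j (take j k) / denom k)
  (Y := fun k => slice_set j (take j k))) //.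
rewrite lee_fin; apply: ler_sum => k _; exact: pr_rej_atom_le.
Qed.

Lemma FDR_le t : (FDR P alpha lambda tau Pr null t <= a%:E)%E.
Proof.
rewrite /FDR (_ : (fun w => _) = fun w =>
   (\sum_(j < t | null j) (rej j w)%:R / denom (history t w))%R); last first.
  by apply/funext => w; rewrite /num_false_rej natr_sum mulr_suml num_rej_rej_count.
rewrite ge0_expectation_sum; first last.
- by move=> j w; rewrite divr_ge0 ?ler0n // ltW ?denom_gt0.
- by move=> j; exact: measurable_rej_div_denom.
apply: (@le_trans _ _ (\sum_(j < t | null j) 'E_Pr[fun w => (gain j w / denom (history t w))%R])%E).
  by apply: lee_sum => j nj; exact: expectation_rej_div_denom_le.
apply: (@le_trans _ _ (\sum_(j < t) 'E_Pr[fun w => (gain j w / denom (history t w))%R])%E).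
  apply: (@lee_sum_nneg_subset _ _ _ predT) => // j _.
  by apply: expectation_ge0 => w; exact: gain_div_denom_ge0.
rewrite -ge0_expectation_sum; first last.
- by move=> j w; exact: gain_div_denom_ge0.
- by move=> j; exact: measurable_gain_div_denom.
rewrite -(expectation_cst Pr a); apply: expectation_le.
- by apply: measurable_sum => j; exact: measurable_gain_div_denom.
- exact: measurable_cst.
- by move=> w; apply: sumr_ge0 => j _; exact: gain_div_denom_ge0.
- by move=> w; exact: ltW.
by apply: filterS (FDP_ADDIS_le t) => w /=; rewrite FDP_ADDISE mulr_suml.
Qed.

End ADDIS.

Theorem theorem1 (d : measure_display) (T : measurableType d) (R : realType)
  (Pr : probability T R) (P : nat -> T -> R) (null : nat -> bool)
  (alpha lambda tau : nat -> hist -> R) (a : R) :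
  0 < a < 1 ->
  (forall j, measurable_fun setT (P j)) ->
  (forall j w, 0 <= P j w <= 1) ->
  (forall t h, size h = t ->
     [/\ 0 <= alpha t h <= 1, 0 <= lambda t h <= 1 & 0 <= tau t h <= 1]) ->
  (forall j w, alpha_at P alpha lambda tau j w <= lambda_at P alpha lambda tau j w
             < tau_at P alpha lambda tau j w) ->
  (forall t, {ae Pr, forall w, FDP_ADDIS P alpha lambda tau t w <= a}) ->
  (cond_unif_conservative P alpha lambda tau Pr null ->
     forall t, mFDR P alpha lambda tau Pr null t <= a)
  /\
  (cond_unif_conservative P alpha lambda tau Pr null ->
   nulls_independent P Pr null ->
   monotone_past alpha -> monotone_past lambda ->
   monotone_past (fun t h => 1 - tau t h) ->
     forall t, (FDR P alpha lambda tau Pr null t <= a%:E)%E).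
Proof.
move=> /andP[a_gt0 _] mP _ levels01 levels_order FDP_le; split.
  by move=> conservative t; exact: mFDR_le.
by move=> conservative indep alpha_mono lambda_mono tau_anti t; exact: FDR_le.
Qed.
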